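(* Let $n\ge 2$, $\mathbf A\in\mathcal G_n$ and $x\in\mathcal G_n(\mathbf A,\mathbf C_n)$. For each $i\in\operatorname{ran}x\setminus\{0\}$ let $u_i\colon A\to\{0,1\}$ be defined by $u_i(a)=1$ if and only if $x(a)\ge i$. Then each $u_i$ lies in $\mathcal D(U(\mathbf A),\mathbf 2)$, and the assignment $i\mapsto u_i$ is a bijection from $\operatorname{ran}x\setminus\{0\}$ onto the set ${\uparrow}(\omega\circ x)$ of elements of the poset $\mathcal D(U(\mathbf A),\mathbf 2)$ lying above $\omega\circ x$. In particular $|{\uparrow}(\omega\circ x)|\le n-1$. Moreover, for $x,y\in\mathcal G_n(\mathbf A,\mathbf C_n)$: $\omega\circ y$ covers $\omega\circ x$ in $\mathcal D(U(\mathbf A),\mathbf 2)$ if and only if $x^{-1}(\top)\subseteq y^{-1}(\top)$ and $|\operatorname{ran}x|-1=|\operatorname{ran}y|$.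
   Context: Fix an integer $n\ge 2$. $\mathbf C_n$ is the Heyting algebra whose universe is the chain $\{0<1<\dots<n-1\}$, with lattice operations min and max, $\bot=0$, $\top=n-1$, and $a\to b=\top$ if $a\le b$, $a\to b=b$ if $b<a$. $\mathcal G_n$ denotes the class of algebras isomorphic to subalgebras of direct powers of $\mathbf C_n$ (the variety generated by $\mathbf C_n$). For $\mathbf A\in\mathcal G_n$, $\mathcal G_n(\mathbf A,\mathbf C_n)$ is the set of Heyting algebra homomorphisms $\mathbf A\to\mathbf C_n$, and $\operatorname{ran}x$ denotes the image of $x$. $U(\mathbf A)$ denotes the bounded distributive lattice reduct of $\mathbf A$; $\mathbf 2$ is the two-element bounded lattice $\{0<1\}$; $\mathcal D(U(\mathbf A),\mathbf 2)$ is the set of bounded-lattice homomorphisms $U(\mathbf A)\to\mathbf 2$, ordered pointwise, and ${\uparrow}u$ denotes the set of elements $\ge u$ in this poset. $\omega\colon U(\mathbf C_n)\to\mathbf 2$ is the lattice homomorphism with $\omega(\top)=1$ and $\omega(k)=0$ for $k<\top$. *)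

From mathcomp Require Import all_boot.
From Stdlib Require Import ClassicalEpsilon.
Set Implicit Arguments. Unset Strict Implicit. Unset Printing Implicit Defensive.

(* An algebra in the signature of Heyting algebras (meet, join, bot, top, ->).
   No axioms are required: membership in G_n (below) forces them. *)
Record halg := HAlg {
  hcar :> Type;
  hmeet : hcar -> hcar -> hcar;
  hjoin : hcar -> hcar -> hcar;
  hbot : hcar;
  htop : hcar;
  himp : hcar -> hcar -> hcar }.

(* C_n is the chain 'I_n = {0 < ... < n-1}; top = n-1.
   x : A -> 'I_n is a Heyting-algebra homomorphism A -> C_n. *)
Definition hom_Cn (n : nat) (A : halg) (x : A -> 'I_n) : Prop :=
  [/\ forall a b, val (x (hmeet a b)) = minn (x a) (x b),
      forall a b, val (x (hjoin a b)) = maxn (x a) (x b),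
      val (x (hbot A)) = 0,
      val (x (htop A)) = n.-1 &
      forall a b, val (x (himp a b)) = if (x a <= x b) then n.-1 else val (x b)].

(* A is in G_n: A is isomorphic to a subalgebra of a direct power C_n^I,
   i.e. there is an injective homomorphism A -> C_n^I (whose components
   e i : A -> C_n are homomorphisms). *)
Definition in_Gn (n : nat) (A : halg) : Prop :=
  exists (I : Type) (e : I -> A -> 'I_n),
    (forall i, hom_Cn (e i)) /\
    (forall a b, (forall i, e i a = e i b) -> a = b).

Definition isD (A : halg) (u : A -> bool) : Prop :=
  [/\ forall a b, u (hmeet a b) = u a && u b,
      forall a b, u (hjoin a b) = u a || u b,
      u (hbot A) = false &
      u (htop A) = true].

Definition Dle (A : halg) (u v : A -> bool) : Prop := forall a, u a ==> v a.
Definition Dlt (A : halg) (u v : A -> bool) : Prop := Dle u v /\ ~ Dle v u.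
Definition Dcovers (A : halg) (u v : A -> bool) : Prop :=
  Dlt u v /\ ~ (exists w, isD w /\ Dlt u w /\ Dlt w v).

Definition omega (n : nat) (k : 'I_n) : bool := val k == n.-1.

Definition asbool (P : Prop) : bool :=
  if excluded_middle_informative P then true else false.

Definition ran (n : nat) (A : halg) (x : A -> 'I_n) : {set 'I_n} :=
  [set i | asbool (exists a, x a = i)].

Definition u_of (n : nat) (A : halg) (x : A -> 'I_n) (i : 'I_n) : A -> bool :=
  fun a => i <= x a.

From mathcomp Require Import all_boot zify.
From Stdlib Require Import ClassicalEpsilon FunctionalExtensionality ProofIrrelevance.
Set Implicit Arguments. Unset Strict Implicit. Unset Printing Implicit Defensive.

(* Let x : A -> C_n be a Heyting homomorphism and T = x(top) = n-1.  The maps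
   u_i = [i <= x(.)] form a chain, reversely ordered by i, and omega o x = u_T.
   The key observation is that a lattice homomorphism u : U(A) -> 2 with
   omega o x <= u is an up-set for the preorder induced by x: if x a <= x b,
   then u(a -> b) = 1 because x(a -> b) = T, and the Heyting identity
   a /\ (a -> b) <= b (valid in C_n, hence in every A in G_n) gives u b = 1.
   Hence u = u_k with k the least x-value on u^{-1}(1); this is the bijection.

   For the covering statement, omega o y >= omega o x means exactly
   x^{-1}(T) <= y^{-1}(T), and then omega o y = u_i for some i in ran x.
   On the one hand u_T is covered by u_i iff i is the predecessor of T in
   ran x, i.e. iff ran x meets [i, T] in exactly two points.  On the other
   hand y collapses [i, T] to T and is injective on ran x below i, so that
   |ran y| = |ran x /\ [0, i)| + 1; comparing cardinals gives the result. *)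

Lemma asboolP (P : Prop) : reflect P (asbool P).
Proof. by rewrite /asbool; case: excluded_middle_informative => h; constructor. Qed.

Lemma ranP n (A : halg) (x : A -> 'I_n) (i : 'I_n) :
  reflect (exists a, x a = i) (i \in ran x).
Proof. by rewrite inE; apply: asboolP. Qed.

(* In G_n the Heyting identity a /\ (a -> b) <= b holds, since it holds in C_n
   and G_n embeds in powers of C_n. *)
Lemma meet_imp_le n (A : halg) (hA : in_Gn n A) (a b : A) :
  hmeet (hmeet a (himp a b)) b = hmeet a (himp a b).
Proof.
case: hA => I [e [he e_inj]]; apply: e_inj => i; apply: val_inj.
case: (he i) => hm _ _ _ hi; rewrite !hm hi.
have := ltn_ord (e i a); have := ltn_ord (e i b).
case: ifP => le_ab; rewrite -?subn1 /=; lia.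
Qed.

Lemma factor_through (A I J : Type) (j0 : J) (x : A -> I) (y : A -> J) :
  (forall a b, x a = x b -> y a = y b) -> exists f : I -> J, forall a, f (x a) = y a.
Proof.
move=> xy; pose f (s : I) : J :=
  match excluded_middle_informative (exists a, x a = s) with
  | left h => y (proj1_sig (constructive_indefinite_description _ h))
  | right _ => j0 end.
exists f => a; rewrite /f; case: excluded_middle_informative => [h|[]]; last by exists a.
by case: constructive_indefinite_description => a' /= /xy.
Qed.

Lemma inj_into_ord_pred (n : nat) (hn : 2 <= n) (B : Type) (P : B -> Prop)
    (f : 'I_n -> B) :
  (forall t, P t -> exists2 i : 'I_n, val i != 0 & t = f i) ->
  exists g : {t : B | P t} -> 'I_(n - 1), injective g.
Proof.
move=> onto; have h0 : 0 < n - 1 by lia.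
pose idx (t : {t : B | P t}) := [pick i : 'I_n | (val i != 0) && asbool (sval t = f i)].
exists (fun t => insubd (Ordinal h0) (oapp val 0 (idx t)).-1).
have idxP t : exists2 i : 'I_n, (idx t = Some i) & (val i != 0) /\ sval t = f i.
  rewrite /idx; case: pickP => [i /andP[i0 /asboolP ti] | none]; first by exists i.
  by case: (onto _ (proj2_sig t)) => i i0 ti; have := none i; rewrite i0 /=; case: asboolP.
move=> s t; case: (idxP s) => i -> [i0 si]; case: (idxP t) => j -> [j0 tj] /=.
move=> /(congr1 val); rewrite !val_insubd.
have := ltn_ord i; have := ltn_ord j; move: i0 j0 => /= i0 j0 hj hi.
have -> : i.-1 < n - 1 by lia.
have -> : j.-1 < n - 1 by lia.
move=> /= ij; have {}ij : i = j by apply: val_inj => /=; lia.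
by apply: eq_sig_hprop => [? | ]; [apply: proof_irrelevance | rewrite si tj ij].
Qed.

Section Thresholds.

Variables (n : nat) (A : halg) (x : A -> 'I_n).
Hypothesis hx : hom_Cn x.

Local Notation T := (x (htop A)).
Local Notation omx := (fun a => omega (x a)).

Lemma val_xtop : val T = n.-1.
Proof. by case: hx. Qed.

Lemma le_xtop (s : 'I_n) : s <= T.
Proof. by rewrite val_xtop; have := ltn_ord s; lia. Qed.

Lemma xtop_in_ran : T \in ran x.
Proof. by apply/ranP; exists (htop A). Qed.

Lemma omega_u_xtop : omx = u_of x T.
Proof.
apply: functional_extensionality => a; rewrite /omega /u_of val_xtop.
have := ltn_ord (x a); rewrite -subn1; case: (ltngtP (x a) (n - 1)) => /=; lia.
Qed.

Lemma u_of_isD (i : 'I_n) : val i != 0 -> isD (u_of x i).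
Proof.
case: hx => hm hj hb ht _ i0; rewrite /u_of; split.
- by move=> a b; rewrite hm leq_min.
- by move=> a b; rewrite hj leq_max.
- by rewrite hb; move: i0 => /=; lia.
- by rewrite ht; have := ltn_ord i => /=; lia.
Qed.

Lemma Dle_u_ofE (i j : 'I_n) : i \in ran x -> Dle (u_of x i) (u_of x j) <-> j <= i.
Proof.
move=> /ranP[a <-]; split; first by move/(_ a); rewrite /u_of leqnn.
by move=> ji b; apply/implyP; apply: leq_trans.
Qed.

Lemma u_of_inj (i j : 'I_n) : i \in ran x -> j \in ran x -> u_of x i = u_of x j -> i = j.
Proof.
move=> ir jr ij; apply/val_inj/eqP; rewrite /= eqn_leq.
by apply/andP; split; [apply/(Dle_u_ofE _ jr) | apply/(Dle_u_ofE _ ir)];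
  rewrite ij => a; apply/implyP.
Qed.

Lemma Dle_omega_u_of (i : 'I_n) : Dle omx (u_of x i).
Proof. by rewrite omega_u_xtop; apply/Dle_u_ofE; [exact: xtop_in_ran | exact: le_xtop]. Qed.

Lemma omega_isD : 2 <= n -> isD omx.
Proof. by move=> hn; rewrite omega_u_xtop; apply: u_of_isD; rewrite val_xtop; lia. Qed.

Lemma Dle_omegaE (y : A -> 'I_n) :
  Dle omx (fun a => omega (y a)) <-> (forall a, val (x a) = n.-1 -> val (y a) = n.-1).
Proof.
rewrite /Dle /omega; split => [le a /eqP xa | incl a].
- by have := le a; rewrite xa => /eqP.
- by apply/implyP => /eqP /incl ->.
Qed.

Lemma card_above_two (i : 'I_n) : i \in ran x ->
  #|ran x :\: [set s : 'I_n | s < i]| = 2 <->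
  i < T /\ (forall j, j \in ran x -> i < j -> j < T -> False).
Proof.
move=> ir; set H := ran x :\: _.
have HP s : (s \in H) = (s \in ran x) && (i <= s) by rewrite in_setD inE -leqNgt andbC.
have iTH : [set i; T] \subset H.
  apply/subsetP => s; rewrite in_set2 => /orP[] /eqP ->;
  by rewrite HP ?ir ?leqnn ?xtop_in_ran ?le_xtop.
split => [H2 | [iT nomid]].
- have iT : i < T.
    rewrite ltn_neqAle le_xtop andbT; apply/eqP => iT.
    suff : #|H| <= #|[set T]| by rewrite H2 cards1.
    apply/subset_leq_card/subsetP => s; rewrite HP in_set1 => /andP[_ ls].
    by apply/eqP/val_inj/eqP; rewrite /= eqn_leq le_xtop -iT.
  split=> // j jr ij jT; suff : #|[set i; T]| < #|H|.
    by rewrite H2 cards2 (_ : i != T) //; apply: contraTneq iT => ->; rewrite ltnn.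
  apply: proper_card; rewrite properE iTH; apply/subsetPn; exists j.
    by rewrite HP jr ltnW.
  rewrite !inE; apply/norP; split; [apply: contraTneq ij | apply: contraTneq jT];
  by move=> ->; rewrite ltnn.
- suff -> : H = [set i; T].
    by rewrite cards2 (_ : i != T) //; apply: contraTneq iT => ->; rewrite ltnn.
  apply/eqP; rewrite eqEsubset iTH andbT; apply/subsetP => s; rewrite HP in_set2.
  case/andP => sr ls; case: (ltngtP i s) => [is_ | si | /val_inj ->].
  + case: (ltngtP s T) => [sT | Ts | /val_inj ->].
    * by case: (nomid s sr is_ sT).
    * by move: Ts; rewrite ltnNge le_xtop.
    * by rewrite eqxx orbT.
  + by move: si; rewrite ltnNge ls.
  + by rewrite eqxx.
Qed.

Hypothesis hA : in_Gn n A.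

Lemma up_closed (u : A -> bool) : isD u -> Dle omx u ->
  forall a b, x a <= x b -> u a -> u b.
Proof.
case: hx => _ _ _ _ hi [um _ _ _] hle a b ab ua.
have uab : u (himp a b) by have := hle (himp a b); rewrite /omega hi ab eqxx.
have : u (hmeet a (himp a b)) by rewrite um ua uab.
by rewrite -(meet_imp_le hA) um => /andP[].
Qed.

Lemma above_omega_u_of (u : A -> bool) : isD u -> Dle omx u ->
  exists2 k : 'I_n, (k \in ran x) && (val k != 0) & u = u_of x k.
Proof.
move=> hu hle; have up := up_closed hu hle.
have ex : exists m, asbool (exists a, u a /\ val (x a) = m).
  by exists (val T); apply/asboolP; exists (htop A); case: hu.
case: (ex_minnP ex) => m /asboolP [a0 [ua0 xa0]] m_min.
exists (x a0); first (apply/andP; split; first by apply/ranP; exists a0).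
  apply/negP => /eqP x0; have : u (hbot A).
    by apply: up ua0; case: hx => _ _ -> _ _; rewrite x0.
  by case: hu => _ _ ->.
apply: functional_extensionality => a; rewrite /u_of; apply/idP/idP => [ua | xa].
- by rewrite xa0; apply: m_min; apply/asboolP; exists a.
- exact: up xa ua0.
Qed.

Lemma covers_u_ofE (i : 'I_n) : i \in ran x ->
  Dcovers (u_of x T) (u_of x i) <->
  i < T /\ (forall j, j \in ran x -> i < j -> j < T -> False).
Proof.
have Tr := xtop_in_ran; move=> ir; split.
- case=> [[_ nle] nomid]; have iT : i < T.
    by rewrite ltnNge; apply: contra_notN nle => /(Dle_u_ofE _ ir).
  split=> // j jr ij jT; apply: nomid; exists (u_of x j); split.
    by apply: u_of_isD; move: ij => /=; lia.
  split; split.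
  + by apply/(Dle_u_ofE _ Tr); apply: le_xtop.
  + by move/(Dle_u_ofE _ jr); rewrite leqNgt jT.
  + by apply/(Dle_u_ofE _ jr); apply: ltnW.
  + by move/(Dle_u_ofE _ ir); rewrite leqNgt ij.
- case=> iT nomid; split.
    split; first by apply/(Dle_u_ofE _ Tr); apply: le_xtop.
    by move/(Dle_u_ofE _ ir); rewrite leqNgt iT.
  case=> w [hw [[le1 nle1] [le2 nle2]]]; rewrite -omega_u_xtop in le1.
  have [j /andP[jr _] wj] := above_omega_u_of hw le1; subst w.
  have jT : j < T by rewrite ltnNge; apply: contra_notN nle1 => /(Dle_u_ofE _ jr).
  have ij : i < j by rewrite ltnNge; apply: contra_notN nle2 => /(Dle_u_ofE _ ir).
  exact: nomid j jr ij jT.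
Qed.

End Thresholds.

Section Refinement.

Variables (n : nat) (A : halg) (x y : A -> 'I_n) (i : 'I_n).
Hypotheses (hx : hom_Cn x) (hy : hom_Cn y).
Hypothesis hyi : forall a, omega (y a) = (i <= x a).

Lemma refine_mono (a b : A) : x a <= x b -> y a <= y b.
Proof.
case: hx hy => _ _ _ _ hix [_ _ _ _ hiy] ab.
have := hyi (himp a b); rewrite /omega hiy hix ab.
have := ltn_ord i; have := ltn_ord (y a); have := ltn_ord (y b).
by case: ifP => // le_ab; rewrite -subn1 /=; lia.
Qed.

Lemma refine_strict (a b : A) : x a < x b -> x a < i -> y a < y b.
Proof.
case: hx hy => _ _ _ _ hix [_ _ _ _ hiy] ab ai.
have := hyi (himp b a); rewrite /omega hiy hix [x b <= x a]leqNgt ab /=.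
have := ltn_ord (y a); have := ltn_ord (y b).
by case: ifP => le_ba; rewrite -subn1 /=; lia.
Qed.

Lemma refine_top (a : A) : i <= x a -> y a = y (htop A).
Proof.
move=> ia; apply: val_inj; rewrite (val_xtop hy); apply/eqP.
by rewrite -/(omega (y a)) hyi.
Qed.

Lemma card_ran_refine : #|ran y| = #|ran x :&: [set s : 'I_n | s < i]| + 1.
Proof.
have [f fx] : exists f : 'I_n -> 'I_n, forall a, f (x a) = y a.
  apply: (factor_through i) => a b xab.
  by apply: val_inj; apply/eqP; rewrite eqn_leq !refine_mono ?xab.
set L := ran x :&: [set s : 'I_n | s < i].
have LP s : reflect (exists2 a, x a = s & x a < i) (s \in L).
  apply: (iffP setIP) => [[/ranP[a <-]] | [a <- ai]]; rewrite inE; first by exists a.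
  by split=> //; apply/ranP; exists a.
have -> : ran y = y (htop A) |: (f @: L).
  apply/setP => s; rewrite in_setU1; apply/ranP/orP => [[a <-] | [/eqP -> | ]].
  - case: (ltnP (x a) i) => ai; last by left; rewrite (refine_top ai).
    by right; apply/imsetP; exists (x a); [apply/LP; exists a | rewrite fx].
  - by exists (htop A).
  - by case/imsetP => _ /LP[a <- _] ->; exists a.
have topL : y (htop A) \notin f @: L.
  apply/imsetP => -[_ /LP[a <- ai]]; rewrite fx => ya.
  by have := hyi a; rewrite -ya /omega (val_xtop hy) eqxx leqNgt ai.
rewrite cardsU1 topL addnC card_in_imset // => _ _ /LP[a <- ai] /LP[b <- bi].
rewrite !fx => yab; apply: val_inj; case: (ltngtP (x a) (x b)) => // ab.
- by have := refine_strict ab ai; rewrite yab ltnn.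
- by have := refine_strict ab bi; rewrite yab ltnn.
Qed.

End Refinement.

Theorem lemma2p1 (n : nat) (hn : 2 <= n) (A : halg) (hA : in_Gn n A)
    (x : A -> 'I_n) (hx : hom_Cn x) :
  (* each u_i lies in D(U(A),2) *)
  (forall i : 'I_n, i \in ran x -> val i != 0 -> isD (u_of x i)) /\
  (* i |-> u_i maps ran x \ {0} into the up-set of omega o x *)
  (forall i : 'I_n, i \in ran x -> val i != 0 ->
     Dle (fun a => omega (x a)) (u_of x i)) /\
  (* injective *)
  (forall i j : 'I_n, i \in ran x -> val i != 0 -> j \in ran x -> val j != 0 ->
     u_of x i = u_of x j -> i = j) /\
  (* surjective onto the up-set of omega o x *)
  (forall u : A -> bool, isD u -> Dle (fun a => omega (x a)) u ->
     exists2 i : 'I_n, (i \in ran x) && (val i != 0) & u = u_of x i) /\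
  (* in particular |up(omega o x)| <= n - 1 *)
  (exists g : {u : A -> bool | isD u /\ Dle (fun a => omega (x a)) u} -> 'I_(n - 1),
     injective g) /\
  (* covering characterization *)
  (forall y : A -> 'I_n, hom_Cn y ->
     (Dcovers (fun a => omega (x a)) (fun a => omega (y a)) <->
      ((forall a, val (x a) = n.-1 -> val (y a) = n.-1) /\
       #|ran x| - 1 = #|ran y|))).
Proof.
split; [|split; [|split; [|split; [|split]]]].
- by move=> i _; apply: u_of_isD.
- by move=> i _ _; apply: Dle_omega_u_of.
- by move=> i j ir _ jr _; apply: u_of_inj.
- exact: above_omega_u_of.
- apply: (inj_into_ord_pred hn (f := u_of x)) => u [hu hle].
  by have [i /andP[_ i0] ->] := above_omega_u_of hx hA hu hle; exists i.
move=> y hy.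
(* Both sides force omega o x <= omega o y, which makes omega o y = u_i. *)
suff cover_card : Dle (fun a => omega (x a)) (fun a => omega (y a)) ->
    Dcovers (fun a => omega (x a)) (fun a => omega (y a)) <-> #|ran x| - 1 = #|ran y|.
  split=> [cov | [incl card]].
  - have le : Dle (fun a => omega (x a)) (fun a => omega (y a)) by case: cov => -[].
    by split; [apply/Dle_omegaE | apply/cover_card].
  - by have le := proj2 (Dle_omegaE x y) incl; apply/cover_card.
move=> le; have [i /andP[ir _] yi] := above_omega_u_of hx hA (omega_isD hy hn) le.
rewrite omega_u_xtop // yi; apply: iff_trans (covers_u_ofE hx hA ir) _.
apply: iff_trans (iff_sym (card_above_two hx ir)) _.
rewrite -(cardsID [set s : 'I_n | s < i] (ran x)).
rewrite (card_ran_refine hx hy (fun a => congr1 (fun u => u a) yi)).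
by set H := #|ran x :\: _|; set L := #|ran x :&: _|; split => ?; lia.
Qed.
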